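(* Either let all graphs below be undirected, or let all be directed. Let $D$ be a graph with $n$ vertices and $f(D)=f$, let $R\subseteq V(D)$ be a bad set of $D$, and let $r'\in V(D)\setminus R$. Then there is a family $(D_i)_{i\in\mathbb{N}}$ of graphs such that for every $i$: \begin{itemize} \item $n(D_i)=n+i(n-1)$; \item $f(D_i)\geq f+if$, with equality if $R$ is an inclusion-wise minimal bad set of $D$; \item the degeneracy of $D_i$ is at most $\mathrm{deg}_{\mathrm{RL}}(D,R,r')$. \end{itemize}
   Context: Undirected graphs are finite and simple; directed graphs are oriented graphs (no loops, no multiple arcs, no antiparallel arcs). $n(H)$ is the number of vertices; $f(H)$ is the minimum size of a set $F\subseteq V(H)$ such that $H-F$ has no (directed, in the directed case) cycle. A set $R\subseteq V(H)$ is bad if it is not contained in any minimum feedback vertex set of $H$. A vertex ordering $\phi:V\to\{1,\dots,|V|\}$ is a $k$-elimination ordering if every vertex has at most $k$ neighbours (in the underlying undirected graph) preceding it in $\phi$; the degeneracy of a graph is the least such $k$. For $S\subseteq V$, an ordering is $S$-last if $\phi(u)<\phi(v)$ for all $u\in S$ and $v\in V\setminus S$. Let $D_{r'\times|R|}$ be the graph obtained from $D$ by replacing $r'$ by an independent set $S$ of $|R|$ new vertices, each joined to the rest of $D$ exactly as $r'$ was (same in- and out-neighbours in the directed case, same neighbours in the undirected case). The right-left-degeneracy $\mathrm{deg}_{\mathrm{RL}}(D,R,r')$ is the minimum $k$ such that $D_{r'\times|R|}$ has an $S$-last $k$-elimination ordering. $\mathbb{N}=\{0,1,2,\dots\}$.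 *)

From mathcomp Require Import all_boot.
Set Implicit Arguments. Unset Strict Implicit. Unset Printing Implicit Defensive.

Definition is_graph (directed : bool) (T : finType) (e : rel T) : bool :=
  [forall x, ~~ e x x] &&
  (if directed then [forall x, forall y, e x y ==> ~~ e y x]
   else [forall x, forall y, e x y == e y x]).

(* Undirected: at least 3 vertices; directed: a directed closed walk without
   repeated vertices (length >= 3 automatically in an oriented graph). *)
Definition is_cyc (directed : bool) (T : finType) (e : rel T) (s : seq T) : bool :=
  [&& uniq s, (if directed then 0 < size s else 2 < size s) & cycle e s].

(* H - F has a (directed, in the directed case) cycle.  Cycles are uniq so
   have at most #|T| vertices. *)
Definition has_cycle_off (directed : bool) (T : finType) (e : rel T)
    (F : {set T}) : bool :=
  [exists k : 'I_#|T|.+1, [exists t : k.-tuple T,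
     is_cyc directed e t && all (fun x => x \notin F) t]].

Definition is_fvs (directed : bool) (T : finType) (e : rel T) (F : {set T}) : bool :=
  ~~ has_cycle_off directed e F.

(* f(H): minimum size of a feedback vertex set (setT is always one). *)
Definition fvn (directed : bool) (T : finType) (e : rel T) : nat :=
  \big[minn/#|T|]_(F : {set T} | is_fvs directed e F) #|F|.

Definition is_min_fvs (directed : bool) (T : finType) (e : rel T) (F : {set T}) : bool :=
  is_fvs directed e F && (#|F| == fvn directed e).

Definition bad (directed : bool) (T : finType) (e : rel T) (R : {set T}) : bool :=
  ~~ [exists F : {set T}, is_min_fvs directed e F && (R \subset F)].

Definition minimal_bad (directed : bool) (T : finType) (e : rel T) (R : {set T}) : bool :=
  bad directed e R && [forall R' : {set T}, (R' \proper R) ==> ~~ bad directed e R'].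

Definition uadj (T : finType) (e : rel T) (u v : T) : bool := e u v || e v u.

Definition elim_ordering (T : finType) (e : rel T) (k : nat)
    (phi : {ffun T -> 'I_#|T|}) : bool :=
  injectiveb phi &&
  [forall v, #|[set u | uadj e u v & phi u < phi v]| <= k].

Definition has_elim_ordering (T : finType) (e : rel T) (k : nat) : bool :=
  [exists phi : {ffun T -> 'I_#|T|}, elim_ordering e k phi].

(* degeneracy: least k admitting a k-elimination ordering (k = #|T| always works) *)
Definition degeneracy (T : finType) (e : rel T) : nat :=
  \big[minn/#|T|]_(k < #|T|.+1 | has_elim_ordering e k) k.

Definition has_S_last_elim_ordering (T : finType) (e : rel T) (S : {set T}) (k : nat) : bool :=
  [exists phi : {ffun T -> 'I_#|T|}, elim_ordering e k phi &&
     [forall u in S, forall v in ~: S, phi u < phi v]].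

(* D_{r' x m}: r' replaced by an independent set S of m new copies of r'. *)
Section Blowup.
Variables (T : finType) (e : rel T) (r' : T) (m : nat).
Definition blow_vt : finType := ({x : T | x != r'} + 'I_m)%type.
Definition blow_rel : rel blow_vt := fun a b =>
  match a, b with
  | inl x, inl y => e (val x) (val y)
  | inl x, inr _ => e (val x) r'
  | inr _, inl y => e r' (val y)
  | inr _, inr _ => false
  end.
Definition blow_S : {set blow_vt} := [set a : blow_vt | if a is inr _ then true else false].
End Blowup.


Definition degRL (T : finType) (e : rel T) (R : {set T}) (r' : T) : nat :=
  \big[minn/#|blow_vt r' #|R| |]_(k < #|blow_vt r' #|R| |.+1 |
      has_S_last_elim_ordering (@blow_rel T e r' #|R|) (@blow_S T r' #|R|) k) k.

From mathcomp Require Import all_boot zify.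
Set Implicit Arguments. Unset Strict Implicit. Unset Printing Implicit Defensive.

(* D_i stacks i + 1 layers: layer 0 is a copy of D, and layer p > 0 is a copy of
   D - r' in which r' is played by the whole copy of R in layer p - 1.

   Lower bound: layer p together with one vertex of R from layer p - 1 (outside the
   feedback set if possible) spans a copy of D.  As R is bad, a feedback set spends
   at least f + [R_p inside] there, where R_p is the copy of R in layer p, so layer
   p alone costs f + [R_p inside] - [R_(p-1) inside]; the sum telescopes to (i+1) f.

   Upper bound for minimal bad R: pick x in R and a minimum feedback set F of D
   containing R - x, and copy F into every layer, the vertex r' of layer p being
   represented by x in layer p - 1.  A cycle avoiding this set stays in its top
   layer plus that copy of x, so it projects to a cycle of D - F.

   Degeneracy: order D_i layer by layer, each layer as an S-last ordering of
   D_{r' x |R|}; an earlier neighbour lies in the same layer or is a copy of R in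
   the layer below, which plays the role of one of the copies of r'. *)

Section BigMin.
Variables (I : finType) (P : pred I) (F : I -> nat) (init : nat).

Lemma bigmin_leq_cond j : P j -> \big[minn/init]_(i | P i) F i <= F j.
Proof.
rewrite unlock; elim: (index_enum I) (mem_index_enum j) => // x r IHr.
rewrite inE => /orP [/eqP <- | jr] Pj /=; first by rewrite Pj geq_minl.
by case: (P x); rewrite ?geq_min IHr ?orbT.
Qed.

Lemma bigmin_leq_init : \big[minn/init]_(i | P i) F i <= init.
Proof. by elim/big_rec: _ => // i m _ IHm; rewrite geq_min IHm orbT. Qed.

Lemma bigmin_attained j0 : P j0 -> F j0 <= init ->
  exists2 j, P j & \big[minn/init]_(i | P i) F i = F j.
Proof.
move=> Pj0 Fj0; case: (arg_minnP F Pj0) => j Pj minj; exists j => //.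
apply/eqP; rewrite eqn_leq bigmin_leq_cond //=.
elim/big_rec: _ => [|i m Pi IHm]; first exact: leq_trans (minj _ Pj0) Fj0.
by rewrite leq_min minj.
Qed.

End BigMin.

Section FeedbackVertexSets.
Variables (d : bool) (T : finType) (e : rel T).

Lemma has_cycle_offP (F : {set T}) :
  reflect (exists s, is_cyc d e s && all (fun x => x \notin F) s)
          (has_cycle_off d e F).
Proof.
apply: (iffP existsP) => [[k /existsP [t /andP [c a]]] | [s /andP [c a]]].
  by exists (val t); rewrite c a.
have us : uniq s by case/and3P: c.
have hs : size s < #|T|.+1 by rewrite ltnS -(card_uniqP us) max_card.
exists (Ordinal hs); apply/existsP; exists (@Tuple (Ordinal hs) _ s (eqxx _)).
by rewrite /= c a.
Qed.

Lemma is_fvs_setT : is_fvs d e setT.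
Proof.
apply/has_cycle_offP => -[[|x s] /andP [/and3P [_ hs _] a]]; first by case: d hs.
by rewrite /= inE in a.
Qed.

Lemma is_graph_irr a : is_graph d e -> e a a = false.
Proof. by case/andP => /forallP /(_ a) /negbTE. Qed.

Lemma fvn_le F : is_fvs d e F -> fvn d e <= #|F|.
Proof. exact: bigmin_leq_cond. Qed.

Lemma fvn_attained : exists2 F, is_fvs d e F & fvn d e = #|F|.
Proof. by apply: bigmin_attained is_fvs_setT _; rewrite cardsT. Qed.

Lemma fvn_add_bad R F :
  bad d e R -> is_fvs d e F -> fvn d e + (R \subset F) <= #|F|.
Proof.
move=> /existsPn /(_ F) notmin fF; have := fvn_le fF.
rewrite /is_min_fvs fF /= in notmin.
case: (boolP (R \subset F)) notmin => RF; last by rewrite addn0.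
by rewrite andbT addn1 ltn_neqAle eq_sym => ->.
Qed.

Lemma bad_neq0 R : bad d e R -> R != set0.
Proof.
have [F fF minF] := fvn_attained.
apply: contraL => /eqP ->; rewrite negbK; apply/existsP; exists F.
by rewrite /is_min_fvs fF minF eqxx sub0set.
Qed.

End FeedbackVertexSets.

Lemma is_cyc_map_in d (X Y : finType) (eX : rel X) (eY : rel Y) (f : X -> Y) s :
  is_cyc d eX s -> {in s &, injective f} ->
  {in s &, forall u v, eX u v -> eY (f u) (f v)} -> is_cyc d eY (map f s).
Proof.
case/and3P => us ss cs fi fe; apply/and3P; split.
- by rewrite map_inj_in_uniq.
- by rewrite size_map.
- rewrite cycle_map; apply: (sub_in_cycle (P := mem s)) cs; last exact/allP.
  by move=> u v uin vin /fe; apply.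
Qed.

Lemma is_fvs_preimset d (X Y : finType) (eX : rel X) (eY : rel Y) (f : X -> Y) F :
  injective f -> {homo f : u v / eX u v >-> eY u v} ->
  is_fvs d eY F -> is_fvs d eX (f @^-1: F).
Proof.
move=> fi fe; apply: contra => /has_cycle_offP [s /andP [cs a]].
apply/has_cycle_offP; exists (map f s); apply/andP; split.
  by apply: is_cyc_map_in cs _ _ => [u v _ _ /fi | u v _ _ /fe].
by rewrite all_map; apply: sub_all a => x; rewrite /= inE.
Qed.

Definition earlier_nbrs (U : finType) (e : rel U) (key : U -> nat) (v : U) : {set U} :=
  [set u | uadj e u v & key u < key v].

Lemma ordering_of_key (U : finType) (key : U -> nat) : injective key ->
  exists2 phi : {ffun U -> 'I_#|U|}, injective phi &
    forall u v, (phi u < phi v) = (key u < key v).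
Proof.
move=> key_inj; pose rk u := #|[set v | key v < key u]|.
have rk_lt u : rk u < #|U|.
  rewrite -cardsT proper_card //; apply/properP; split; first exact: subsetT.
  by exists u; rewrite ?inE ?ltnn.
have rk_mono u v : (rk u < rk v) = (key u < key v).
  case: (ltnP (key u) (key v)) => [lt_uv | le_vu].
    apply: proper_card; apply/properP; split; last by exists u; rewrite !inE ?ltnn.
    by apply/subsetP => w; rewrite !inE => /ltn_trans; apply.
  apply/negbTE; rewrite -leqNgt subset_leq_card //.
  by apply/subsetP => w; rewrite !inE => /leq_trans; apply.
exists [ffun u => Ordinal (rk_lt u)] => [u v | u v]; rewrite !ffunE //=.
move=> /(congr1 val) /= eq_rk; apply: key_inj.
by case: (ltngtP (key u) (key v)) (rk_mono u v) (rk_mono v u); rewrite eq_rk ltnn.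
Qed.

Section OrderingsFromKeys.
Variables (U : finType) (e : rel U) (k : nat) (key : U -> nat).
Hypothesis key_inj : injective key.
Hypothesis key_bound : forall v, #|earlier_nbrs e key v| <= k.

Lemma S_last_of_key (S : {set U}) :
  (forall u v, u \in S -> v \notin S -> key u < key v) ->
  has_S_last_elim_ordering e S k.
Proof.
move=> S_first; have [phi phi_inj phi_mono] := ordering_of_key key_inj.
apply/existsP; exists phi; apply/andP; split; first (apply/andP; split).
- exact/injectiveP.
- apply/forallP => v; apply: leq_trans (key_bound v); apply: subset_leq_card.
  by apply/subsetP => u; rewrite !inE phi_mono.
- apply/forallP => u; apply/implyP => uS; apply/forallP => v; apply/implyP.
  by rewrite inE phi_mono; apply: S_first.
Qed.

Lemma degeneracy_le_key : degeneracy e <= k.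
Proof.
have /existsP [phi /andP [phi_elim _]] := @S_last_of_key set0 (fun u v => ltac:(by rewrite inE)).
case: (leqP k #|U|) => [le_kU | /ltnW]; last exact: leq_trans (bigmin_leq_init _ _ _).
apply: (@bigmin_leq_cond _ _ _ _ (Ordinal (le_kU : k < #|U|.+1))).
by apply/existsP; exists phi.
Qed.

End OrderingsFromKeys.

Lemma degRL_S_last (T : finType) (e : rel T) (R : {set T}) (r' : T) :
  has_S_last_elim_ordering (@blow_rel T e r' #|R|) (@blow_S T r' #|R|) (degRL e R r').
Proof.
set M := #|blow_vt r' #|R| |.
pose P (j : 'I_M.+1) := has_S_last_elim_ordering (@blow_rel T e r' #|R|) (@blow_S T r' #|R|) j.
pose key (b : blow_vt r' #|R|) := match b with inl x => #|R| + enum_rank x | inr s => val s end.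
have P_max : P ord_max.
  apply: (@S_last_of_key _ _ _ key) => [[x|s] [y|t] /= | v | [x|s] [y|t]];
    rewrite ?inE //=.
  - by move/eqP; rewrite eqn_add2l => /eqP /val_inj /enum_rank_inj ->.
  - by move=> eq_key; have := ltn_ord t; rewrite -eq_key ltnNge leq_addr.
  - by move=> eq_key; have := ltn_ord s; rewrite eq_key ltnNge leq_addr.
  - by move/val_inj ->.
  - exact: max_card.
  - by move=> _ _; apply: leq_trans (ltn_ord s) (leq_addr _ _).
have [j Pj def_degRL] := @bigmin_attained _ P (fun j => j) M _ P_max (leqnn M).
by rewrite /degRL def_degRL.
Qed.

Section Pullback.
Variables (U W : finType) (h : U -> W) (E : rel W).
Let EU : rel U := fun a b => E (h a) (h b).

Lemma is_graph_pullback d : is_graph d E -> is_graph d EU.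
Proof.
case/andP => /forallP irrE hd; apply/andP; split; first by apply/forallP => x; apply: irrE.
by case: d hd => /forallP hd; apply/forallP => x; apply/forallP => y;
  have /forallP := hd (h x); apply.
Qed.

Hypothesis h_inj : injective h.
Hypothesis E_in_image : forall a b, E a b -> exists u, h u = a.

Lemma is_fvs_imset d G : is_fvs d EU G -> is_fvs d E (h @: G).
Proof.
apply: contra => /has_cycle_offP [s /andP [cs a]].
have [s' def_s] : exists s', map h s' = s.
  have: all (mem (codom h)) s.
    apply/allP => w ws; case/and3P: cs => _ _ /next_cycle /(_ ws) /E_in_image [u <-].
    exact: codom_f.
  elim: s {cs a} => [|w t IH] /=; first by exists [::].
  by case/andP => /codomP [u ->] /IH [t' <-]; exists (u :: t').
apply/has_cycle_offP; exists s'; apply/andP; split.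
  by move: cs; rewrite -def_s /is_cyc map_inj_uniq // size_map cycle_map.
move: a; rewrite -def_s all_map; apply: sub_all => u /=.
by apply: contra => uG; apply: imset_f.
Qed.

Lemma fvn_pullback d : fvn d EU = fvn d E.
Proof.
apply/eqP; rewrite eqn_leq; apply/andP; split.
  have [F fF ->] := fvn_attained d E.
  apply: leq_trans (fvn_le (is_fvs_preimset h_inj (fun a b => id) fF)) _.
  by rewrite -(card_imset _ h_inj) subset_leq_card // sub_imset_pre.
have [G fG ->] := fvn_attained d EU.
by rewrite -(card_imset _ h_inj); apply/fvn_le/is_fvs_imset.
Qed.

Lemma degeneracy_pullback_le (key : W -> nat) k : injective key ->
  (forall v, #|earlier_nbrs E key (h v)| <= k) -> degeneracy EU <= k.
Proof.
move=> key_inj key_bound.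
apply: (@degeneracy_le_key U EU k (key \o h)) => [u v eq_key | v].
  exact/h_inj/key_inj.
apply: leq_trans (key_bound v).
rewrite -(card_imset (earlier_nbrs EU (key \o h) v) h_inj) subset_leq_card //.
by apply/subsetP => w /imsetP [u]; rewrite !inE => nbr_u ->.
Qed.

End Pullback.

Lemma path_pred_const (X : eqType) (E : rel X) (L : pred X) a t :
  {in a :: t &, forall u v, E u v -> L u = L v} -> path E a t ->
  {in a :: t, forall w, L w = L a}.
Proof.
move=> EL pt; have L_trans : transitive (fun u v => L u == L v).
  by move=> u v w /eqP -> /eqP ->.
have /(order_path_min L_trans) /allP L_t : path (fun u v => L u == L v) a t.
  apply: (sub_in_path (P := mem (a :: t))) pt; last exact/allP.
  by move=> u v u_at v_at /EL; rewrite /= => ->.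
by move=> w; rewrite inE => /predU1P [-> // | /L_t /eqP <-].
Qed.

Lemma cycle_confined (X : eqType) (E : rel X) (L : pred X) (y : X) (s : seq X) :
  uniq s -> cycle E s -> ~~ L y -> has L s ->
  {in s &, forall u v, E u v -> u != y -> v != y -> L u = L v} ->
  {in s, forall w, (w == y) || L w}.
Proof.
move=> us cs nLy /hasP [w0 w0s Lw0] EL.
suff [a [t [at_s y_at pt s_at]]] : exists a t, [/\ {subset a :: t <= s}, y \notin a :: t,
    path E a t & {subset s <= y :: a :: t}].
  have EL_at : {in a :: t &, forall u v, E u v -> L u = L v}.
    move=> u v u_at v_at Euv; apply: EL (at_s u _) (at_s v _) Euv _ _ => //.
      by apply: contraNneq y_at => <-.
    by apply: contraNneq y_at => <-.
  have := path_pred_const EL_at pt; have := s_at w0 w0s.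
  rewrite inE => /predU1P [w0y | w0_at L_at]; first by rewrite -w0y Lw0 in nLy.
  move=> w /s_at; rewrite inE => /predU1P [-> | w_at]; first by rewrite eqxx.
  by rewrite L_at // -(L_at w0) ?Lw0 ?orbT.
case: (boolP (y \in s)) => [y_s | y_s].
  case: (rot_to y_s) => k t def_rot.
  have mem_s : s =i y :: t by move=> z; rewrite -def_rot mem_rot.
  case: t def_rot mem_s => [|a t] def_rot mem_s.
  - by move: w0s Lw0; rewrite mem_s inE => /eqP ->; rewrite (negbTE nLy).
  - have := us; rewrite -(rot_uniq k) def_rot => /andP [y_at _].
    have := cs; rewrite -(rot_cycle k) def_rot /= rcons_path => /and3P [_ pt _].
    exists a, t; split=> // [z z_at | z]; last by rewrite mem_s.
    by rewrite mem_s inE z_at orbT.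
case: s us cs w0s y_s EL => [|a t] // us cs _ y_s _; exists a, t; split => //.
- by move: cs; rewrite /= rcons_path => /andP [].
- by move=> z z_at; rewrite inE z_at orbT.
Qed.

Lemma telescoping_lower_bound (f n : nat) (c : nat -> nat) (b : nat -> bool) :
  f + b 0 <= c 0 -> (forall j, j < n -> f + b j.+1 <= c j.+1 + b j) ->
  n.+1 * f <= \sum_(j < n.+1) c j.
Proof.
move=> c0 cS; suff /(_ n (leqnn n)) : forall m, m <= n -> m.+1 * f + b m <= \sum_(j < m.+1) c j.
  exact: leq_trans (leq_addr _ _).
elim=> [_ | m IHm lt_mn]; first by rewrite big_ord_recr big_ord0 /= mul1n.
have := IHm (ltnW lt_mn); have := cS m lt_mn.
rewrite [in X in _ -> _ -> X]big_ord_recr /= [in X in _ -> _ -> X]mulSn; lia.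
Qed.

Section Stack.
Variables (d : bool) (T : finType) (e : rel T) (R : {set T}) (r' : T) (i : nat).

Definition stack_vt : finType := ('I_i.+1 * T)%type.

(* The copy (p, r') of r' is absent from the layers p > 0; [view a b] is the vertex
   of D that a plays for its neighbour b. *)
Definition in_stack (w : stack_vt) := (w.1 == 0 :> nat) || (w.2 != r').

Definition below (a b : stack_vt) := (b.1 == a.1.+1 :> nat) && (a.2 \in R).

Definition view (a b : stack_vt) : T := if below a b then r' else a.2.

Definition stack_rel : rel stack_vt := fun a b =>
  [&& in_stack a, in_stack b,
      [|| a.1 == b.1 :> nat, below a b | below b a] & e (view a b) (view b a)].

Hypothesis e_graph : is_graph d e.
Hypothesis r'_notin_R : r' \notin R.

Lemma below_irr a : below a a = false.
Proof. by rewrite /below (ltn_eqF (ltnSn _)). Qed.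

Lemma stack_rel_irr a : stack_rel a a = false.
Proof. by rewrite /stack_rel /view below_irr (is_graph_irr _ e_graph) !andbF. Qed.

Lemma is_graph_stack : is_graph d stack_rel.
Proof.
apply/andP; split; first by apply/forallP => a; rewrite stack_rel_irr.
have layers_sym (a b : stack_vt) :
    [|| a.1 == b.1 :> nat, below a b | below b a] = [|| b.1 == a.1 :> nat, below b a | below a b].
  by rewrite eq_sym [below a b || _]orbC.
case/andP: e_graph => _; case: d => /forallP e_dir; apply/forallP => a; apply/forallP => b.
  rewrite /stack_rel layers_sym; apply/implyP => /and4P [_ _ _ e_ab].
  have /forallP /(_ (view b a)) /implyP /(_ e_ab) /negbTE e_ba := e_dir (view a b).
  by rewrite e_ba !andbF.
have /forallP /(_ (view b a)) /eqP := e_dir (view a b).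
by rewrite /stack_rel layers_sym andbCA => ->.
Qed.

Lemma stack_rel_same (p : 'I_i.+1) a b :
  in_stack (p, a) -> in_stack (p, b) -> stack_rel (p, a) (p, b) = e a b.
Proof. by move=> ina inb; rewrite /stack_rel /view /below /= (ltn_eqF (ltnSn p)) ina inb eqxx. Qed.

Lemma stack_rel_up (p q : 'I_i.+1) a b : q = p.+1 :> nat -> a \in R -> b != r' ->
  stack_rel (p, a) (q, b) = e r' b /\ stack_rel (q, b) (p, a) = e b r'.
Proof.
move=> pq aR b_r'; have ab_below : below (p, a) (q, b) by rewrite /below /= pq eqxx aR.
have ba_below : below (q, b) (p, a) = false.
  by rewrite /below /= pq (ltn_eqF (leqW (ltnSn p))).
have ina : in_stack (p, a) by rewrite /in_stack /= (memPn r'_notin_R a aR) orbT.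
have inb : in_stack (q, b) by rewrite /in_stack /= b_r' orbT.
by rewrite /stack_rel /view ab_below ba_below ina inb !orbT.
Qed.

Definition layer (FW : {set stack_vt}) (j : nat) := [set w in FW | w.1 == j :> nat].

Definition covers_R_at (FW : {set stack_vt}) (j : nat) :=
  [forall w : stack_vt, (w.1 == j :> nat) && (w.2 \in R) ==> (w \in FW)].

Lemma card_layers (FW : {set stack_vt}) : #|FW| = \sum_(j < i.+1) #|layer FW j|.
Proof.
rewrite -sum1_card (partition_big (fun w : stack_vt => w.1) predT) //=.
by apply: eq_bigr => j _; rewrite -sum1_card; apply: eq_bigl => w; rewrite !inE.
Qed.

End Stack.

Arguments stack_rel {T} e R r' i.

Lemma leq_implyb (b c : bool) : (b -> c) -> b <= c.
Proof. by case: b c => [] [] // /(_ isT). Qed.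

Section StackLowerBound.
Variables (d : bool) (T : finType) (e : rel T) (R : {set T}) (r' : T) (i : nat).
Hypothesis e_graph : is_graph d e.
Hypothesis r'_notin_R : r' \notin R.
Hypothesis R_bad : bad d e R.
Local Notation stack_rel := (stack_rel e R r' i).
Variable FW : {set stack_vt T i}.
Hypothesis FW_fvs : is_fvs d stack_rel FW.

Lemma covers_R_atP j :
  reflect (forall w : stack_vt T i, w.1 = j :> nat -> w.2 \in R -> w \in FW)
          (covers_R_at R FW j).
Proof.
apply: (iffP forallP) => [cov w /eqP wj wR | cov w].
  by apply: (implyP (cov w)); rewrite wj wR.
by apply/implyP => /andP [/eqP /cov]; apply.
Qed.

Lemma bottom_layer_bound : fvn d e + covers_R_at R FW 0 <= #|layer FW 0|.
Proof.
pose emb a : stack_vt T i := (ord0, a).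
have emb_inj : injective emb by move=> a b [].
have emb_rel : {homo emb : a b / e a b >-> stack_rel a b}.
  by move=> a b e_ab; rewrite stack_rel_same.
have FW_bound := fvn_add_bad R_bad (is_fvs_preimset emb_inj emb_rel FW_fvs).
apply: leq_trans (leq_trans _ FW_bound) _; first rewrite leq_add2l.
  by apply: leq_implyb => /covers_R_atP cov; apply/subsetP => a aR; rewrite inE cov.
rewrite -(card_imset _ emb_inj) subset_leq_card //.
by apply/subsetP => w /imsetP [a]; rewrite !inE => a_FW ->; rewrite a_FW.
Qed.

Lemma layer_step_bound j : j < i ->
  fvn d e + covers_R_at R FW j.+1 <= #|layer FW j.+1| + covers_R_at R FW j.
Proof.
move=> lt_ji; have j_val : (inord j : 'I_i.+1) = j :> nat by rewrite inordK // ltnW.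
have j1_val : (inord j.+1 : 'I_i.+1) = j.+1 :> nat by rewrite inordK.
have next_j : (inord j.+1 : 'I_i.+1) = (inord j : 'I_i.+1).+1 :> nat by rewrite j_val j1_val.
have [z zR z_out] : exists2 z, z \in R &
    ~~ covers_R_at R FW j -> ((inord j : 'I_i.+1), z) \notin FW.
  case: (boolP (covers_R_at R FW j)) => [_ | /forallPn [w]].
    by case/set0Pn: (bad_neq0 R_bad) => z zR; exists z.
  rewrite negb_imply => /andP [/andP [/eqP wj wR] w_out]; exists w.2 => // _.
  have -> : (inord j : 'I_i.+1) = w.1 by apply: val_inj; rewrite /= j_val wj.
  by rewrite -surjective_pairing.
have z_r' : z != r' by apply: contraNneq r'_notin_R => <-.
pose emb a : stack_vt T i := if a == r' then (inord j, z) else (inord j.+1, a).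
have emb_inj : injective emb.
  move=> a b; rewrite /emb; case: eqVneq => [-> | a_r']; case: eqVneq => [-> | b_r'] //.
  - by case=> /(congr1 val); rewrite /= j_val j1_val; lia.
  - by case=> /(congr1 val); rewrite /= j_val j1_val; lia.
  - by case.
have emb_rel : {homo emb : a b / e a b >-> stack_rel a b}.
  move=> a b e_ab; rewrite /emb; case: eqVneq e_ab => [-> | a_r'] e_ab.
    have b_r' : b != r' by apply: contraTneq e_ab => ->; rewrite (is_graph_irr _ e_graph).
    by rewrite (negbTE b_r'); have [-> _] := stack_rel_up e r'_notin_R next_j zR b_r'.
  case: eqVneq e_ab => [-> | b_r'] e_ab.
    by have [_ ->] := stack_rel_up e r'_notin_R next_j zR a_r'.
  by rewrite stack_rel_same // /in_stack ?a_r' ?b_r' orbT.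
have FW_bound := fvn_add_bad R_bad (is_fvs_preimset emb_inj emb_rel FW_fvs).
apply: leq_trans (leq_trans _ FW_bound) _; first rewrite leq_add2l.
  apply: leq_implyb => /covers_R_atP cov; apply/subsetP => a aR; rewrite inE /emb.
  by rewrite (negbTE (memPn r'_notin_R a aR)) cov.
rewrite (cardsD1 r') addnC leq_add //.
  pose up a : stack_vt T i := (inord j.+1, a).
  have up_inj : injective up by move=> a b [].
  rewrite -(card_imset _ up_inj) subset_leq_card //.
  apply/subsetP => w /imsetP [a]; rewrite !inE /emb => /andP [/negbTE a_r' a_FW] ->.
  by rewrite a_r' in a_FW; rewrite a_FW /= j1_val.
rewrite inE /emb eqxx; case: (boolP (covers_R_at R FW j)) => [_ | /z_out /negbTE ->] //.
exact: leq_b1.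
Qed.

End StackLowerBound.

Lemma fvn_stack_ge d (T : finType) (e : rel T) (R : {set T}) (r' : T) (i : nat) :
  is_graph d e -> r' \notin R -> bad d e R -> i.+1 * fvn d e <= fvn d (stack_rel e R r' i).
Proof.
move=> e_graph r'_notin_R R_bad; have [FW FW_fvs ->] := fvn_attained d (stack_rel e R r' i).
rewrite card_layers.
apply: (telescoping_lower_bound (c := fun j => #|layer FW j|) (b := covers_R_at R FW)).
  exact: (bottom_layer_bound R_bad FW_fvs).
exact: (layer_step_bound e_graph r'_notin_R R_bad FW_fvs).
Qed.

Lemma in_stack_on_cycle d (T : finType) (e : rel T) (R : {set T}) (r' : T) i s :
  is_cyc d (stack_rel e R r' i) s -> {in s, forall w, in_stack r' w}.
Proof. by case/and3P => _ _ /next_cycle cs w /cs /and3P []. Qed.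

Section StackUpperBound.
Variables (d : bool) (T : finType) (e : rel T) (R : {set T}) (r' : T) (i : nat).
Hypothesis e_graph : is_graph d e.
Variables (F : {set T}) (x : T).
Hypothesis F_fvs : is_fvs d e F.
Hypothesis x_R : x \in R.
Hypothesis R_F : R :\ x \subset F.
Local Notation stack_vt := (stack_vt T i).
Local Notation stack_rel := (stack_rel e R r' i).

Definition hub (p : 'I_i.+1) : stack_vt := (inord p.-1, x).

Lemma hub_layer (p : 'I_i.+1) : (hub p).1 = p.-1 :> nat.
Proof. exact/inordK/(leq_ltn_trans (leq_pred p)). Qed.

Definition copy_in_stack (w : stack_vt) : stack_vt :=
  if (w.1 != 0 :> nat) && (w.2 == r') then hub w.1 else w.

Definition stack_fvs := copy_in_stack @: [set w : stack_vt | w.2 \in F].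

Lemma card_stack_fvs : #|stack_fvs| <= i.+1 * #|F|.
Proof.
apply: leq_trans (leq_imset_card _ _) _.
have -> : [set w : stack_vt | w.2 \in F] = setX setT F by apply/setP => -[p a]; rewrite !inE.
by rewrite cardsX cardsT card_ord.
Qed.

Lemma stack_fvs_layer w : in_stack r' w -> w.2 \in F -> w \in stack_fvs.
Proof.
move=> w_in w_F; apply/imsetP; exists w; rewrite ?inE // /copy_in_stack.
by case: w w_in {w_F} => p a /orP [/eqP -> | /negbTE ->]; rewrite ?andbF.
Qed.

Lemma stack_fvs_hub (p : 'I_i.+1) : p != 0 :> nat -> r' \in F -> hub p \in stack_fvs.
Proof.
by move=> p0 r'F; apply/imsetP; exists (p, r'); rewrite ?inE // /copy_in_stack /= p0 eqxx.
Qed.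

Definition top_proj (p : 'I_i.+1) (w : stack_vt) : T := if w.1 == p then w.2 else r'.

Section TopLayer.
Variables (s : seq stack_vt) (p : 'I_i.+1).
Hypothesis s_cyc : is_cyc d stack_rel s.
Hypothesis s_out : all (fun w => w \notin stack_fvs) s.
Hypothesis s_top : has (fun w : stack_vt => w.1 == p) s.
Hypothesis s_max : {in s, forall w : stack_vt, w.1 <= p}.
Local Notation y := (hub p).

Lemma hub_not_top : p != 0 :> nat -> (y.1 == p) = false.
Proof.
by move=> p0; apply/negbTE/eqP => /(congr1 (@nat_of_ord _)); rewrite hub_layer; lia.
Qed.

Lemma below_off_top u v : u \in s -> v \in s -> below R u v -> u != y ->
  (u.1 == p) = false /\ (v.1 == p) = false.
Proof.
move=> us vs /andP [/eqP v_up uR] u_y; split.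
  by apply/negbTE; apply: contraTneq (s_max vs) => u_p; rewrite v_up u_p ltnn.
apply/negbTE/eqP => v_p; move/allP: s_out => /(_ u us); apply/negP/negPn.
have u_layer : u.1 = y.1 by apply/eqP; rewrite -val_eqE /= hub_layer -v_p v_up.
apply: stack_fvs_layer; first exact: in_stack_on_cycle s_cyc _ us.
apply: (subsetP R_F); rewrite !inE uR andbT; apply: contra u_y => /eqP u_x.
by rewrite [u]surjective_pairing u_layer u_x.
Qed.

Lemma top_or_hub : {in s, forall w, (w.1 == p) || ((w == y) && (p != 0 :> nat))}.
Proof.
case: (posnP p) => [p0 w ws | p_pos w ws].
  by rewrite -val_eqE /= p0 -leqn0 -p0 (s_max ws).
have [us _ cs] := and3P s_cyc; rewrite andbT orbC.
have y_top := negbT (hub_not_top (lt0n_neq0 p_pos)).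
apply: (@cycle_confined _ _ (fun w : stack_vt => w.1 == p) y s us cs y_top s_top) w ws.
move=> u v u_s v_s /and4P [_ _ layers _] u_y v_y.
case/or3P: layers => [/eqP u_v | uv | vu].
  by rewrite -!val_eqE /= u_v.
  by have [-> ->] := below_off_top u_s v_s uv u_y.
by have [-> ->] := below_off_top v_s u_s vu v_y.
Qed.

Lemma view_top_proj : {in s &, forall u v, u != v -> view R r' u v = top_proj p u}.
Proof.
move=> u v us vs uv; rewrite /view /top_proj /below.
case/orP: (top_or_hub us) => [u_p | /andP [/eqP u_y p0]].
  by rewrite u_p (eqP u_p) (ltn_eqF (leq_ltn_trans (s_max vs) (ltnSn p))).
case/orP: (top_or_hub vs) => [/eqP v_p | /andP [/eqP v_y _]]; last by rewrite u_y v_y eqxx in uv.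
by rewrite u_y hub_not_top // v_p hub_layer prednK ?lt0n // eqxx x_R.
Qed.

Lemma top_proj_cycle : is_cyc d e (map (top_proj p) s).
Proof.
apply: is_cyc_map_in s_cyc _ _ => [u v us vs | u v us vs uv].
  rewrite /top_proj; case/orP: (top_or_hub us) => [u_p | /andP [/eqP u_y p0]];
    case/orP: (top_or_hub vs) => [v_p | /andP [/eqP v_y p0']].
  - rewrite u_p v_p => eq2.
    by rewrite [u]surjective_pairing [v]surjective_pairing (eqP u_p) (eqP v_p) eq2.
  - rewrite u_p v_y (hub_not_top p0') => u_r'; case/orP: (in_stack_on_cycle s_cyc us).
      by rewrite (eqP u_p) (negbTE p0').
    by rewrite u_r' eqxx.
  - rewrite v_p u_y (hub_not_top p0) => r'_v; case/orP: (in_stack_on_cycle s_cyc vs).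
      by rewrite (eqP v_p) (negbTE p0).
    by rewrite -r'_v eqxx.
  - by rewrite u_y v_y.
have u_v : u != v by apply: contraTneq uv => ->; rewrite (@stack_rel_irr d).
by have /and4P [_ _ _] := uv; rewrite !view_top_proj // eq_sym.
Qed.

Lemma top_proj_out : all (fun a => a \notin F) (map (top_proj p) s).
Proof.
rewrite all_map; apply/allP => w ws; move/allP: s_out => /(_ w ws); apply: contra.
rewrite /top_proj; case/orP: (top_or_hub ws) => [-> | /andP [/eqP -> p0]].
  by apply: stack_fvs_layer; exact: in_stack_on_cycle s_cyc _ ws.
by rewrite hub_not_top //; apply: stack_fvs_hub.
Qed.

End TopLayer.

Lemma is_fvs_stack : is_fvs d stack_rel stack_fvs.
Proof.
apply/has_cycle_offP => -[s /andP [s_cyc s_out]].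
have [w0 w0s] : exists w0, w0 \in s.
  by case/and3P: (s_cyc) => _; case: (s) => [|w0 ?]; [case: d | exists w0; rewrite mem_head].
have [top top_s top_max] := arg_maxnP (fun w : stack_vt => val w.1) w0s.
have s_top : has (fun w : stack_vt => w.1 == top.1) s by apply/hasP; exists top.
move/has_cycle_offP: F_fvs; apply; exists (map (top_proj top.1) s).
by rewrite (top_proj_cycle s_cyc s_out s_top top_max) (top_proj_out s_cyc s_out s_top top_max).
Qed.

End StackUpperBound.

Section BlowUpEmbedding.
Variables (T : finType) (e : rel T) (r' : T) (m : nat) (s0 : 'I_m).

Definition blow_in (u : T) : blow_vt r' m := if insub u is Some x then inl x else inr s0.

Lemma blow_in_neq u (u_r' : u != r') : blow_in u = inl (Sub u u_r').
Proof. by rewrite /blow_in insubT. Qed.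

Lemma blow_in_r' : blow_in r' = inr s0.
Proof. by rewrite /blow_in insubF ?eqxx. Qed.

Lemma blow_in_inj : injective blow_in.
Proof.
move=> a b; case: (eqVneq a r') => [-> | a_r']; case: (eqVneq b r') => [-> | b_r'] //;
  rewrite ?blow_in_r' ?blow_in_neq //; by case.
Qed.

Lemma blow_rel_in a b : e r' r' = false ->
  @blow_rel T e r' m (blow_in a) (blow_in b) = e a b.
Proof.
move=> e_r'; case: (eqVneq a r') => [-> | a_r']; case: (eqVneq b r') => [-> | b_r'];
  by rewrite ?blow_in_r' ?blow_in_neq.
Qed.

End BlowUpEmbedding.

Lemma eq_mulnDl_ltn (M a b c d : nat) : b < M -> d < M ->
  a * M + b = c * M + d -> a = c /\ b = d.
Proof.
move=> bM dM eq_abcd; have M_gt0 : 0 < M by apply: leq_ltn_trans bM.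
have := congr1 (divn^~ M) eq_abcd; have := congr1 (modn^~ M) eq_abcd.
by rewrite /= !modnMDl !divnMDl // !modn_small // !divn_small // !addn0.
Qed.

Section StackDegeneracy.
Variables (d : bool) (T : finType) (e : rel T) (R : {set T}) (r' : T) (i k : nat).
Hypothesis e_graph : is_graph d e.
Variable z0 : T.
Hypothesis z0_R : z0 \in R.
Local Notation stack_vt := (stack_vt T i).
Local Notation stack_rel := (stack_rel e R r' i).
Local Notation blow_vt := (blow_vt r' #|R|).
Local Notation blow_rel := (@blow_rel T e r' #|R|).
Local Notation M := #|blow_vt|.
Variable phi : {ffun blow_vt -> 'I_M}.
Hypothesis phi_inj : injective phi.
Hypothesis phi_bound : forall b, #|earlier_nbrs blow_rel (fun c => phi c) b| <= k.
Hypothesis phi_S_last :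
  forall b c, b \in blow_S r' #|R| -> c \notin blow_S r' #|R| -> phi b < phi c.

Let rk : T -> 'I_#|R| := enum_rank_in z0_R.
Let into_blow : T -> blow_vt := @blow_in T r' #|R| (rk z0).

Definition stack_key (w : stack_vt) := w.1 * M + phi (into_blow w.2).

Lemma stack_key_inj : injective stack_key.
Proof.
move=> w1 w2 /eq_mulnDl_ltn [] // /val_inj eq1 /val_inj /phi_inj /blow_in_inj eq2.
by rewrite [w1]surjective_pairing [w2]surjective_pairing eq1 eq2.
Qed.

Lemma stack_kehub_not_top (v w : stack_vt) : v.1 < w.1 -> stack_key v < stack_key w.
Proof.
move=> vw; apply: (@leq_trans (v.1.+1 * M)).
  by rewrite mulSn addnC ltn_add2l.
by apply: leq_trans (leq_mul vw (leqnn M)) (leq_addr _ _).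
Qed.

Lemma earlier_stack_nbr (v w : stack_vt) : w \in earlier_nbrs stack_rel stack_key v ->
  [/\ in_stack r' w, in_stack r' v, stack_key w < stack_key v,
      (w.1 == v.1 :> nat) || below R w v & uadj e (view R r' w v) v.2].
Proof.
rewrite inE => /andP [adj wv]; have not_vw : below R v w = false.
  apply/negbTE; apply: contraTN wv => /andP [/eqP w_up _].
  by rewrite -leqNgt ltnW // stack_kehub_not_top // w_up.
have view_v : view R r' v w = v.2 by rewrite /view not_vw.
case/orP: adj => /and4P [w_in v_in layers e_wv]; split => //.
- by move: layers; rewrite not_vw orbF.
- by rewrite /uadj -view_v e_wv.
- by move: layers; rewrite not_vw eq_sym.
- by rewrite /uadj -view_v e_wv orbT.
Qed.

Definition blow_nbr (v w : stack_vt) : blow_vt :=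
  if below R w v then inr (rk w.2) else into_blow w.2.

Lemma blow_nbr_earlier v w : w \in earlier_nbrs stack_rel stack_key v ->
  blow_nbr v w \in earlier_nbrs blow_rel (fun c => phi c) (into_blow v.2).
Proof.
case/earlier_stack_nbr => w_in v_in wv layers adj; rewrite inE /blow_nbr.
rewrite /view in adj; case: ifP adj layers => [/andP [/eqP v_up _] | w_v] adj layers.
  have v_r' : v.2 != r' by move: v_in; rewrite /in_stack v_up.
  by rewrite /into_blow (blow_in_neq _ v_r') phi_S_last ?inE // andbT.
rewrite /uadj in adj *; rewrite /into_blow !blow_rel_in ?(is_graph_irr _ e_graph) // adj /=.
by move: wv; rewrite orbF in layers; rewrite /stack_key (eqP layers) ltn_add2l.
Qed.

Lemma blow_nbr_inj v : {in earlier_nbrs stack_rel stack_key v &, injective (blow_nbr v)}.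
Proof.
have into_blow_inl (w : stack_vt) :
    in_stack r' w -> w.1 != 0 :> nat -> exists y, into_blow w.2 = inl y.
  by move=> /orP [/eqP -> // | w_r'] _; exists (Sub w.2 w_r'); rewrite /into_blow blow_in_neq.
move=> w1 w2 /earlier_stack_nbr [w1_in _ _ l1 _] /earlier_stack_nbr [w2_in _ _ l2 _].
rewrite /blow_nbr; case: ifP l1 => [/andP [/eqP up1 R1] | nb1]; rewrite ?orbF => l1;
  case: ifP l2 => [/andP [/eqP up2 R2] | nb2]; rewrite ?orbF => l2.
- move=> [] /(congr1 enum_val); rewrite !enum_rankK_in // => eq2.
  have eq1 : w1.1 = w2.1 by apply/val_inj/succn_inj; rewrite -up1 -up2.
  by rewrite [w1]surjective_pairing [w2]surjective_pairing eq1 eq2.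
- have [|y ->] // := into_blow_inl w2 w2_in; by rewrite (eqP l2) up1.
- have [|y ->] // := into_blow_inl w1 w1_in; by rewrite (eqP l1) up2.
- move=> /blow_in_inj eq2; have eq1 : w1.1 = w2.1 by apply/val_inj; rewrite /= (eqP l1) (eqP l2).
  by rewrite [w1]surjective_pairing [w2]surjective_pairing eq1 eq2.
Qed.

Lemma stack_key_bound v : #|earlier_nbrs stack_rel stack_key v| <= k.
Proof.
rewrite -(card_in_imset (@blow_nbr_inj v)); apply: leq_trans (phi_bound (into_blow v.2)).
by apply/subset_leq_card/subsetP => _ /imsetP [w w_nbr ->]; apply: blow_nbr_earlier.
Qed.

End StackDegeneracy.

Lemma stack_key_of_S_last d (T : finType) (e : rel T) (R : {set T}) (r' : T) (i k : nat) :
  is_graph d e -> R != set0 ->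
  has_S_last_elim_ordering (@blow_rel T e r' #|R|) (@blow_S T r' #|R|) k ->
  exists2 key : stack_vt T i -> nat, injective key &
    forall v, #|earlier_nbrs (stack_rel e R r' i) key v| <= k.
Proof.
move=> e_graph /set0Pn [z0 z0_R] /existsP [phi /andP [/andP [/injectiveP phi_inj phi_bound]]].
move=> /forallP phi_S_last.
have phi_S_last' b c : b \in blow_S r' #|R| -> c \notin blow_S r' #|R| -> phi b < phi c.
  by move=> bS cS; apply: (implyP (forallP (implyP (phi_S_last b) bS) c)); rewrite inE.
exists (stack_key z0_R phi) => [| v]; first exact: stack_key_inj.
apply: (stack_key_bound e_graph _ _ phi_S_last'); exact: (forallP phi_bound).
Qed.

Lemma fvn_stack_le d (T : finType) (e : rel T) (R : {set T}) (r' : T) (i : nat) :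
  is_graph d e -> minimal_bad d e R -> fvn d (stack_rel e R r' i) <= i.+1 * fvn d e.
Proof.
move=> e_graph /andP [R_bad /forallP R_min]; have /set0Pn [x x_R] := bad_neq0 R_bad.
have := R_min (R :\ x); rewrite properD1 //= negbK.
case/existsP => F /andP [/andP [F_fvs /eqP <-] R_F].
exact: leq_trans (fvn_le (is_fvs_stack r' i e_graph F_fvs x_R R_F)) (card_stack_fvs _ _ _ _).
Qed.

Lemma card_in_stack (T : finType) (r' : T) (i : nat) :
  #|[set w : stack_vt T i | in_stack r' w]| = #|T| + i * (#|T| - 1).
Proof.
rewrite -(cardsID [set w : stack_vt T i | w.1 == ord0]).
have -> : [set w : stack_vt T i | in_stack r' w] :&: [set w | w.1 == ord0] = setX [set ord0] setT.
  by apply/setP => -[p a]; rewrite !inE /in_stack /= -val_eqE /=; case: eqP; rewrite ?andbF.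
have -> : [set w : stack_vt T i | in_stack r' w] :\: [set w | w.1 == ord0] =
          setX [set~ ord0] [set~ r'].
  by apply/setP => -[p a]; rewrite !inE /in_stack /= -val_eqE /=; case: eqP.
by rewrite !cardsX cards1 cardsT !cardsC1 card_ord mul1n subn1.
Qed.

Definition relabel (T : finType) (r' : T) (i : nat) (a : 'I_(#|T| + i * (#|T| - 1))) :
  stack_vt T i := enum_val (cast_ord (esym (card_in_stack r' i)) a).
Arguments relabel {T} r' i a.

Lemma relabel_inj (T : finType) (r' : T) (i : nat) : injective (relabel r' i).
Proof. by move=> a b /enum_val_inj /cast_ord_inj. Qed.

Lemma relabel_onto (T : finType) (r' : T) (i : nat) w :
  in_stack r' w -> exists a, relabel r' i a = w.
Proof.
move=> w_in; have w_set : w \in [set w : stack_vt T i | in_stack r' w] by rewrite inE.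
exists (cast_ord (card_in_stack r' i) (enum_rank_in w_set w)).
by rewrite /relabel cast_ordK enum_rankK_in.
Qed.

Theorem mainTheorem11 (directed : bool) (T : finType) (e : rel T)
    (R : {set T}) (r' : T) :
  is_graph directed e ->
  bad directed e R ->
  r' \notin R ->
  exists D : forall i : nat, rel 'I_(#|T| + i * (#|T| - 1)),
    forall i : nat,
      [/\ is_graph directed (D i),
          fvn directed e + i * fvn directed e <= fvn directed (D i),
          (minimal_bad directed e R ->
             fvn directed (D i) = fvn directed e + i * fvn directed e)
        & degeneracy (D i) <= degRL e R r'].
Proof.
move=> e_graph R_bad r'_notin_R.
exists (fun i a b => stack_rel e R r' i (relabel r' i a) (relabel r' i b)) => i.
have edge_onto w w' : stack_rel e R r' i w w' -> exists a, relabel r' i a = w.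
  by case/and3P => w_in _ _; apply: relabel_onto.
have fvn_D := fvn_pullback (@relabel_inj T r' i) edge_onto directed.
have lower := fvn_stack_ge i e_graph r'_notin_R R_bad.
split; rewrite ?fvn_D -?mulSn //.
- exact/is_graph_pullback/is_graph_stack.
- by move=> R_min; apply/eqP; rewrite eqn_leq lower fvn_stack_le.
have [key key_inj key_bound] :=
  stack_key_of_S_last i e_graph (bad_neq0 R_bad) (degRL_S_last e R r').
exact: (degeneracy_pullback_le (@relabel_inj T r' i) key_inj (fun a => key_bound _)).
Qed.
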